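(* $\widetilde{\mathbb{R}}_{sm}$ is an $f$-ring: it is an $l$-ring (with the order $\le$, $\vee=\max$, $\wedge=\min$) and for all $r,s,t\in\widetilde{\mathbb{R}}_{sm}$ with $t\ge0$ one has $(r\wedge s)t=rt\wedge st$.
   Context: Let $I=(0,1]$. $\widetilde{\mathbb{R}}_{sm}=\mathcal{E}_{M,sm}/\mathcal{N}_{sm}$ where $\mathcal{E}_{M,sm}$ is the set of smooth $(r_\varepsilon)_{\varepsilon\in I}\in\mathbb{R}^I$ with $|r_\varepsilon|=O(\varepsilon^{-N})$ for some $N$, and $\mathcal{N}_{sm}$ those smooth nets with $|r_\varepsilon|=O(\varepsilon^m)$ for all $m$. Similarly $\widetilde{\mathbb{R}}_{co}$ is defined with continuous nets; the natural map $\tau_{sm}:\widetilde{\mathbb{R}}_{sm}\to\widetilde{\mathbb{R}}_{co}$ is a ring isomorphism. $r\le s$ means there are representatives with $r_\varepsilon\le s_\varepsilon$ for all $\varepsilon$. $r\wedge s=\min(r,s)=\tau_{sm}^{-1}([(\min(r_\varepsilon,s_\varepsilon))_\varepsilon])$ and $r\vee s=\max(r,s)=\tau_{sm}^{-1}([(\max(r_\varepsilon,s_\varepsilon))_\varepsilon])$. *)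

From Stdlib Require Import Reals.
From Coquelicot Require Import Coquelicot.
Open Scope R_scope.

(* Nets indexed by eps in I = (0,1]; values outside I are irrelevant. *)
Definition net := R -> R.

Definition inI (e : R) : Prop := 0 < e <= 1.

(* smooth on I = (0,1]: C^infinity on an open interval (0, 1+delta) containing I *)
Definition smooth_I (r : net) : Prop :=
  exists delta : R, 0 < delta /\
    forall (n : nat) (x : R), 0 < x < 1 + delta -> ex_derive_n r n x.

Definition moderate (r : net) : Prop :=
  exists (N : nat) (C eps0 : R), 0 < eps0 /\
    forall e, 0 < e <= eps0 -> Rabs (r e) <= C / e ^ N.

Definition negligible (r : net) : Prop :=
  forall m : nat, exists C eps0 : R, 0 < eps0 /\
    forall e, 0 < e <= eps0 -> Rabs (r e) <= C * e ^ m.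

(* representatives of elements of R~_sm : smooth moderate nets *)
Definition SmMod (r : net) : Prop := smooth_I r /\ moderate r.

(* equality in the quotient  E_{M,sm} / N_sm *)
Definition eqsm (r s : net) : Prop := negligible (fun e => r e - s e).

Definition nadd (r s : net) : net := fun e => r e + s e.
Definition nmul (r s : net) : net := fun e => r e * s e.
Definition nzero : net := fun _ => 0.

Definition lesm (r s : net) : Prop :=
  exists r' s' : net, SmMod r' /\ SmMod s' /\ eqsm r r' /\ eqsm s s' /\
    forall e, inI e -> r' e <= s' e.

(* m represents r /\ s = tau_sm^{-1}([(min(r_eps, s_eps))_eps]) :
   m is a smooth moderate net whose image in R~_co equals the class of
   the continuous net min(r,s) (i.e. differs from it by a negligible net) *)
Definition is_minsm (r s m : net) : Prop :=
  SmMod m /\ negligible (fun e => m e - Rmin (r e) (s e)).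

Definition is_maxsm (r s m : net) : Prop :=
  SmMod m /\ negligible (fun e => m e - Rmax (r e) (s e)).

From Stdlib Require Import Reals Lra Lia Psatz FunctionalExtensionality.
From Coquelicot Require Import Coquelicot.
Open Scope R_scope.

(* On representatives, [r <= s] amounts to [r <= s + d] pointwise on (0,1] for some
   smooth negligible net [d]; with this reformulation the order axioms and the
   compatibility with [+] and [*] are pointwise arithmetic on such corrections.
   The minimum of [r] and [s] is represented by the smooth net
   [(r + s - sqrt ((r - s)^2 + d^2)) / 2] with [d e = exp (- 1 / e)], which lies
   within [d / 2] below [Rmin r s]; maxima follow by negation. If [0 <= t + d] then
   [|Rmin r s * t - Rmin (r t) (s t)| <= |d| (|r| + |s|)] is negligible, which is the
   f-ring identity. *)

Inductive alg_gen (B : net -> Prop) : net -> Prop :=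
  | alg_gen_base f : B f -> alg_gen B f
  | alg_gen_const c : alg_gen B (fun _ => c)
  | alg_gen_add f g : alg_gen B f -> alg_gen B g -> alg_gen B (fun x => f x + g x)
  | alg_gen_mul f g : alg_gen B f -> alg_gen B g -> alg_gen B (fun x => f x * g x).

Definition deriv_closed (b : R) (B : net -> Prop) : Prop :=
  forall f, B f -> exists g, alg_gen B g /\ forall x, 0 < x < b -> is_derive f x (g x).

(* Members of [alg_gen B] are C^oo on (0, b) when [deriv_closed b B]: by the sum and
   product rules the algebra is again closed under differentiation. *)
Definition smooth_on (b : R) (f : net) : Prop :=
  exists B, deriv_closed b B /\ alg_gen B f.

Lemma alg_gen_mono (B1 B2 : net -> Prop) :
  (forall f, B1 f -> B2 f) -> forall f, alg_gen B1 f -> alg_gen B2 f.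
Proof.
  intros H f G; induction G; [apply alg_gen_base | apply alg_gen_const
    | apply alg_gen_add | apply alg_gen_mul]; auto.
Qed.

Lemma alg_gen_derive b B : deriv_closed b B -> forall f, alg_gen B f ->
  exists g, alg_gen B g /\ forall x, 0 < x < b -> is_derive f x (g x).
Proof.
  intros HB f G; induction G as [f Hf | c | f g _ [f' [Gf' Df]] _ [g' [Gg' Dg]]
    | f g Gf [f' [Gf' Df]] Gg [g' [Gg' Dg]]].
  - exact (HB f Hf).
  - exists (fun _ => 0); split; [apply alg_gen_const |].
    intros x _; apply (is_derive_const c x).
  - exists (fun x => f' x + g' x); split; [apply alg_gen_add; auto |].
    intros x Hx; apply (is_derive_plus f g x); auto.
  - exists (fun x => f' x * g x + f x * g' x); split.
    + apply alg_gen_add; apply alg_gen_mul; auto.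
    + intros x Hx; apply (is_derive_mult f g x); auto; intros; apply Rmult_comm.
Qed.

Lemma alg_gen_Derive_n b B : deriv_closed b B -> forall f, alg_gen B f -> forall n,
  exists g, alg_gen B g /\
    forall x, 0 < x < b -> Derive_n f n x = g x /\ ex_derive_n f n x.
Proof.
  intros HB f Gf n; induction n as [| n [g [Gg Hg]]].
  - exists f; split; auto; intros x _; simpl; auto.
  - destruct (alg_gen_derive b B HB g Gg) as [h [Gh Dh]].
    exists h; split; auto; intros x Hx.
    assert (Hloc : locally x (fun y => g y = Derive_n f n y)).
    { apply (filter_imp (fun y => 0 < y < b)).
      - intros y Hy; symmetry; apply Hg, Hy.
      - apply (open_and _ _ (open_gt 0) (open_lt b)), Hx. }
    assert (D : is_derive (Derive_n f n) x (h x))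
      by (apply (is_derive_ext_loc g); auto).
    split; simpl; [apply is_derive_unique, D | exists (h x); exact D].
Qed.

Lemma smooth_on_ex_derive_n b f : smooth_on b f ->
  forall n x, 0 < x < b -> ex_derive_n f n x.
Proof.
  intros [B [HB Gf]] n x Hx.
  destruct (alg_gen_Derive_n b B HB f Gf n) as [g [_ Hg]]; apply Hg, Hx.
Qed.

Lemma deriv_closed_union b B1 B2 :
  deriv_closed b B1 -> deriv_closed b B2 -> deriv_closed b (fun f => B1 f \/ B2 f).
Proof.
  intros H1 H2 f [Hf | Hf]; [destruct (H1 f Hf) as [g [G D]] | destruct (H2 f Hf) as [g [G D]]];
    exists g; split; auto; revert G; apply alg_gen_mono; auto.
Qed.

Lemma smooth_on_add b f g :
  smooth_on b f -> smooth_on b g -> smooth_on b (fun x => f x + g x).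
Proof.
  intros [B1 [D1 G1]] [B2 [D2 G2]]; exists (fun f => B1 f \/ B2 f); split.
  - apply deriv_closed_union; auto.
  - apply alg_gen_add; [revert G1 | revert G2]; apply alg_gen_mono; auto.
Qed.

Lemma smooth_on_mul b f g :
  smooth_on b f -> smooth_on b g -> smooth_on b (fun x => f x * g x).
Proof.
  intros [B1 [D1 G1]] [B2 [D2 G2]]; exists (fun f => B1 f \/ B2 f); split.
  - apply deriv_closed_union; auto.
  - apply alg_gen_mul; [revert G1 | revert G2]; apply alg_gen_mono; auto.
Qed.

Lemma smooth_on_const b c : smooth_on b (fun _ => c).
Proof. exists (fun _ => False); split; [intros f [] | apply alg_gen_const]. Qed.

Lemma smooth_on_ext b f g : smooth_on b f -> (forall x, f x = g x) -> smooth_on b g.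
Proof. intros H E; replace g with f; [exact H | apply functional_extensionality, E]. Qed.

Lemma smooth_on_le b b' f : b' <= b -> smooth_on b f -> smooth_on b' f.
Proof.
  intros Hb [B [HB G]]; exists B; split; auto.
  intros g Hg; destruct (HB g Hg) as [h [Gh Dh]]; exists h; split; auto.
  intros x Hx; apply Dh; lra.
Qed.

Lemma smooth_I_smooth_on r : smooth_I r -> exists b, 1 < b /\ smooth_on b r.
Proof.
  intros [d [Hd H]]; exists (1 + d); split; [lra |].
  exists (fun f => exists n, f = Derive_n r n); split.
  - intros f [n ->]; exists (Derive_n r (S n)); split.
    + apply alg_gen_base; exists (S n); reflexivity.
    + intros x Hx; apply Derive_correct, (H (S n) x Hx).
  - apply alg_gen_base; exists 0%nat; reflexivity.
Qed.

Lemma smooth_on_smooth_I b r : 1 < b -> smooth_on b r -> smooth_I r.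
Proof.
  intros Hb H; exists (b - 1); split; [lra |].
  intros n x Hx; apply (smooth_on_ex_derive_n b); auto; lra.
Qed.

Lemma smooth_I_lift2 (F : net -> net -> net) a b :
  (forall c, smooth_on c a -> smooth_on c b -> smooth_on c (F a b)) ->
  smooth_I a -> smooth_I b -> smooth_I (F a b).
Proof.
  intros HF Ha Hb.
  destruct (smooth_I_smooth_on a Ha) as [c1 [H1 S1]].
  destruct (smooth_I_smooth_on b Hb) as [c2 [H2 S2]].
  apply (smooth_on_smooth_I (Rmin c1 c2)); [apply Rmin_glb_lt; auto |].
  apply HF; [revert S1 | revert S2]; apply smooth_on_le;
    [apply Rmin_l | apply Rmin_r].
Qed.

Definition exp_neg_inv (x : R) : R := exp (- / x).

Lemma smooth_on_exp_neg_inv b : smooth_on b exp_neg_inv.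
Proof.
  set (i := fun x : R => / x).
  exists (fun f => f = exp_neg_inv \/ f = i); split; [| apply alg_gen_base; auto].
  intros f [-> | ->].
  - exists (fun x => i x * i x * exp_neg_inv x); split.
    + repeat apply alg_gen_mul; apply alg_gen_base; auto.
    + intros x Hx; unfold exp_neg_inv, i; auto_derive; [lra | field; lra].
  - exists (fun x => (fun _ => -1) x * (i x * i x)); split.
    + apply alg_gen_mul; [apply alg_gen_const | apply alg_gen_mul; apply alg_gen_base; auto].
    + intros x Hx; unfold i; auto_derive; [lra | field; lra].
Qed.

(* The generators are [sqrt q] and [/ sqrt q], whose derivatives
   [q' / (2 sqrt q)] and [- q' / (2 q sqrt q)] are polynomials in them and [q']. *)
Lemma smooth_on_sqrt b q : smooth_on b q -> (forall x, 0 < x < b -> 0 < q x) ->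
  smooth_on b (fun x => sqrt (q x)).
Proof.
  intros [B [HB Gq]] Hq.
  set (s := fun x => sqrt (q x)); set (w := fun x => / sqrt (q x)).
  set (B' := fun f => B f \/ f = s \/ f = w).
  destruct (alg_gen_derive b B HB q Gq) as [q' [Gq' Dq']].
  assert (Gq'' : alg_gen B' q') by (revert Gq'; apply alg_gen_mono; unfold B'; auto).
  assert (Gw : alg_gen B' w) by (apply alg_gen_base; unfold B'; auto).
  exists B'; split; [| apply alg_gen_base; unfold B'; auto].
  intros f [Hf | [-> | ->]].
  - destruct (HB f Hf) as [g [Gg Dg]]; exists g; split; auto.
    revert Gg; apply alg_gen_mono; unfold B'; auto.
  - exists (fun x => (fun _ => / 2) x * (q' x * w x)); split.
    + apply alg_gen_mul; [apply alg_gen_const | apply alg_gen_mul; auto].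
    + intros x Hx; pose proof (sqrt_lt_R0 _ (Hq x Hx)).
      replace (/ 2 * (q' x * w x)) with (q' x / (2 * sqrt (q x)))
        by (unfold w; field; lra).
      apply is_derive_sqrt; auto.
  - exists (fun x => (fun _ => - / 2) x * (q' x * (w x * (w x * w x)))); split.
    + apply alg_gen_mul; [apply alg_gen_const | repeat apply alg_gen_mul; auto].
    + intros x Hx; pose proof (Hq x Hx); pose proof (sqrt_lt_R0 _ (Hq x Hx)).
      assert (Hsq : sqrt (q x) * sqrt (q x) = q x) by (apply sqrt_sqrt; lra).
      assert (Hd : is_derive (fun y => / sqrt y) (q x) (- / 2 * / (q x * sqrt (q x)))).
      { auto_derive; [lra | rewrite sqrt_sqrt; [field |]; lra]. }
      replace (- / 2 * (q' x * (w x * (w x * w x))))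
        with (q' x * (- / 2 * / (q x * sqrt (q x)))).
      * apply (is_derive_comp (fun y => / sqrt y) q); auto.
      * unfold w; set (t := sqrt (q x)) in *; rewrite <- Hsq; field; lra.
Qed.

(* [|f e| e^N <= C e^m] near 0, i.e. [f = O(e^(m - N))]: [moderate] is the case
   [m = 0] for some [N], [negligible] the case [N = 0] for all [m]. *)
Definition bigO_pow (f : net) (N m : nat) : Prop :=
  exists C eps0, 0 < eps0 <= 1 /\
    forall e, 0 < e <= eps0 -> Rabs (f e) * e ^ N <= C * e ^ m.

Lemma pow_le_1 e n : 0 <= e <= 1 -> e ^ n <= 1.
Proof. intros H; induction n; simpl; nra. Qed.

Lemma bigO_pow_le f g N m : (forall e, 0 < e <= 1 -> Rabs (g e) <= Rabs (f e)) ->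
  bigO_pow f N m -> bigO_pow g N m.
Proof.
  intros Hgf [C [e0 [He0 H]]]; exists C, e0; split; auto.
  intros e He; pose proof (pow_lt e N (proj1 He)).
  apply Rle_trans with (Rabs (f e) * e ^ N); [| apply H; auto].
  apply Rmult_le_compat_r; [lra | apply Hgf; lra].
Qed.

Lemma bigO_pow_const c : bigO_pow (fun _ => c) 0 0.
Proof. exists (Rabs c), 1; split; [lra |]; intros; simpl; lra. Qed.

Lemma bigO_pow_add f g N m :
  bigO_pow f N m -> bigO_pow g N m -> bigO_pow (fun e => f e + g e) N m.
Proof.
  intros [C1 [e1 [He1 H1]]] [C2 [e2 [He2 H2]]]; exists (C1 + C2), (Rmin e1 e2); split.
  - pose proof (Rmin_l e1 e2); split; [apply Rmin_glb_lt |]; lra.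
  - intros e [He Hem]; pose proof (Rmin_l e1 e2); pose proof (Rmin_r e1 e2).
    pose proof (H1 e ltac:(lra)); pose proof (H2 e ltac:(lra)).
    pose proof (Rabs_triang (f e) (g e)); pose proof (pow_lt e N He); nra.
Qed.

Lemma bigO_pow_mul f g N1 m1 N2 m2 : bigO_pow f N1 m1 -> bigO_pow g N2 m2 ->
  bigO_pow (fun e => f e * g e) (N1 + N2) (m1 + m2).
Proof.
  intros [C1 [e1 [He1 H1]]] [C2 [e2 [He2 H2]]]; exists (C1 * C2), (Rmin e1 e2); split.
  - pose proof (Rmin_l e1 e2); split; [apply Rmin_glb_lt |]; lra.
  - intros e [He Hem]; pose proof (Rmin_l e1 e2); pose proof (Rmin_r e1 e2).
    specialize (H1 e ltac:(lra)); specialize (H2 e ltac:(lra)).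
    rewrite Rabs_mult, !pow_add.
    replace (Rabs (f e) * Rabs (g e) * (e ^ N1 * e ^ N2))
      with (Rabs (f e) * e ^ N1 * (Rabs (g e) * e ^ N2)) by ring.
    replace (C1 * C2 * (e ^ m1 * e ^ m2)) with (C1 * e ^ m1 * (C2 * e ^ m2)) by ring.
    pose proof (Rabs_pos (f e)); pose proof (Rabs_pos (g e)).
    pose proof (pow_lt e N1 He); pose proof (pow_lt e N2 He).
    apply Rmult_le_compat; auto; apply Rmult_le_pos; lra.
Qed.

Lemma bigO_pow_weaken f N m k : bigO_pow f N m -> bigO_pow f (N + k) m.
Proof.
  intros [C [e0 [He0 H]]]; exists C, e0; split; auto.
  intros e He; specialize (H e He); rewrite pow_add.
  pose proof (pow_le_1 e k ltac:(lra)); pose proof (pow_lt e k (proj1 He)).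
  pose proof (Rabs_pos (f e)); pose proof (pow_lt e N (proj1 He)).
  assert (0 <= Rabs (f e) * e ^ N) by (apply Rmult_le_pos; lra); nra.
Qed.

Lemma bigO_pow_cancel f N m k : bigO_pow f (N + k) (m + k) -> bigO_pow f N m.
Proof.
  intros [C [e0 [He0 H]]]; exists C, e0; split; auto.
  intros e He; specialize (H e He); rewrite !pow_add in H.
  apply (Rmult_le_reg_r (e ^ k)); [apply pow_lt; lra | lra].
Qed.

Lemma moderate_bigO f : moderate f <-> exists N, bigO_pow f N 0.
Proof.
  split.
  - intros [N [C [e0 [He0 H]]]]; exists N, C, (Rmin e0 1); split.
    + split; [apply Rmin_glb_lt | apply Rmin_r]; lra.
    + intros e [He Hem]; pose proof (Rmin_l e0 1); pose proof (pow_lt e N He).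
      specialize (H e ltac:(lra)); simpl; unfold Rdiv in H.
      apply (Rmult_le_compat_r (e ^ N)) in H; [| lra].
      rewrite Rmult_assoc, Rinv_l in H; lra.
  - intros [N [C [e0 [He0 H]]]]; exists N, C, e0; split; [lra |].
    intros e He; pose proof (pow_lt e N (proj1 He)); specialize (H e He).
    simpl in H; unfold Rdiv; apply (Rmult_le_reg_r (e ^ N)); auto.
    rewrite Rmult_assoc, Rinv_l; lra.
Qed.

Lemma negligible_bigO f : negligible f <-> forall m, bigO_pow f 0 m.
Proof.
  split.
  - intros H m; destruct (H m) as [C [e0 [He0 H']]]; exists C, (Rmin e0 1); split.
    + split; [apply Rmin_glb_lt | apply Rmin_r]; lra.
    + intros e [He Hem]; pose proof (Rmin_l e0 1); simpl.
      rewrite Rmult_1_r; apply H'; lra.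
  - intros H m; destruct (H m) as [C [e0 [He0 H']]]; exists C, e0; split; [lra |].
    intros e He; specialize (H' e He); simpl in H'; lra.
Qed.

Lemma moderate_le f g :
  moderate f -> (forall e, 0 < e <= 1 -> Rabs (g e) <= f e) -> moderate g.
Proof.
  rewrite !moderate_bigO; intros [N H] Hgf; exists N; revert H; apply bigO_pow_le.
  intros e He; specialize (Hgf e He); pose proof (Rle_abs (f e)); lra.
Qed.

Lemma moderate_abs f : moderate f -> moderate (fun e => Rabs (f e)).
Proof.
  rewrite !moderate_bigO; intros [N H]; exists N; revert H; apply bigO_pow_le.
  intros; rewrite Rabs_Rabsolu; lra.
Qed.

Lemma moderate_const c : moderate (fun _ => c).
Proof. apply moderate_bigO; exists 0%nat; apply bigO_pow_const. Qed.

Lemma moderate_add f g : moderate f -> moderate g -> moderate (fun e => f e + g e).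
Proof.
  rewrite !moderate_bigO; intros [N1 H1] [N2 H2]; exists (N1 + N2)%nat.
  apply bigO_pow_add; [| rewrite Nat.add_comm]; apply bigO_pow_weaken; auto.
Qed.

Lemma moderate_mul f g : moderate f -> moderate g -> moderate (fun e => f e * g e).
Proof.
  rewrite !moderate_bigO; intros [N1 H1] [N2 H2]; exists (N1 + N2)%nat.
  exact (bigO_pow_mul f g N1 0 N2 0 H1 H2).
Qed.

Lemma negligible_le f g :
  negligible f -> (forall e, 0 < e <= 1 -> Rabs (g e) <= f e) -> negligible g.
Proof.
  rewrite !negligible_bigO; intros H Hgf m; apply (bigO_pow_le f); [| apply H].
  intros e He; specialize (Hgf e He); pose proof (Rle_abs (f e)); lra.
Qed.

Lemma negligible_abs f : negligible f -> negligible (fun e => Rabs (f e)).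
Proof.
  rewrite !negligible_bigO; intros H m; apply (bigO_pow_le f); [| apply H].
  intros; rewrite Rabs_Rabsolu; lra.
Qed.

Lemma negligible_ext f g :
  negligible f -> (forall e, 0 < e <= 1 -> g e = f e) -> negligible g.
Proof.
  intros H E; apply (negligible_le (fun e => Rabs (f e))); [apply negligible_abs, H |].
  intros; rewrite E; auto; lra.
Qed.

Lemma negligible_add f g :
  negligible f -> negligible g -> negligible (fun e => f e + g e).
Proof. rewrite !negligible_bigO; intros H1 H2 m; apply bigO_pow_add; auto. Qed.

Lemma negligible_opp f : negligible f -> negligible (fun e => - f e).
Proof.
  intros H; apply (negligible_le (fun e => Rabs (f e))); [apply negligible_abs, H |].
  intros; rewrite Rabs_Ropp; lra.
Qed.

Lemma negligible_sub f g :
  negligible f -> negligible g -> negligible (fun e => f e - g e).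
Proof. intros Hf Hg; apply negligible_add; [| apply negligible_opp]; auto. Qed.

Lemma negligible_moderate f : negligible f -> moderate f.
Proof. rewrite negligible_bigO, moderate_bigO; intros H; exists 0%nat; apply H. Qed.

Lemma negligible_mull f g :
  moderate f -> negligible g -> negligible (fun e => f e * g e).
Proof.
  rewrite moderate_bigO, !negligible_bigO; intros [N Hf] Hg m.
  apply (bigO_pow_cancel _ 0 m N).
  pose proof (bigO_pow_mul f g N 0 0 (m + N) Hf (Hg (m + N)%nat)) as Hfg.
  rewrite Nat.add_0_r in Hfg; exact Hfg.
Qed.

Lemma negligible_mulr f g :
  negligible f -> moderate g -> negligible (fun e => f e * g e).
Proof.
  intros Hf Hg; apply (negligible_ext (fun e => g e * f e)).
  - apply negligible_mull; auto.
  - intros; ring.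
Qed.

Lemma negligible_exp_neg_inv : negligible exp_neg_inv.
Proof.
  intros m; set (k := S m); exists (INR k ^ k), 1; split; [lra |].
  intros e [He He1].
  assert (Hk : 0 < INR k) by (apply lt_0_INR; unfold k; lia).
  set (y := / (e * INR k)).
  assert (Hy : 0 < y) by (apply Rinv_0_lt_compat, Rmult_lt_0_compat; lra).
  assert (Hyk : y ^ k <= exp y ^ k).
  { apply pow_incr; split; [lra |]; pose proof (exp_ineq1 y ltac:(lra)); lra. }
  assert (Hdl : exp_neg_inv e = / exp y ^ k).
  { unfold exp_neg_inv; rewrite <- Rpower_pow by apply exp_pos; unfold Rpower.
    rewrite ln_exp, <- exp_Ropp; f_equal; unfold y; field; lra. }
  rewrite Rabs_pos_eq by (left; apply exp_pos); rewrite Hdl.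
  apply Rle_trans with (/ y ^ k); [apply Rinv_le_contravar; [apply pow_lt |]; auto |].
  unfold y; rewrite <- pow_inv, Rinv_inv, Rpow_mult_distr; unfold k at 1; simpl pow at 1.
  assert (0 < e ^ m * INR k ^ k) by (apply Rmult_lt_0_compat; apply pow_lt; lra); nra.
Qed.

Lemma SmMod_add a b : SmMod a -> SmMod b -> SmMod (fun e => a e + b e).
Proof.
  intros [Sa Ma] [Sb Mb]; split; [| apply moderate_add; auto].
  apply (smooth_I_lift2 (fun a b e => a e + b e)); auto; intros; apply smooth_on_add; auto.
Qed.

Lemma SmMod_mul a b : SmMod a -> SmMod b -> SmMod (fun e => a e * b e).
Proof.
  intros [Sa Ma] [Sb Mb]; split; [| apply moderate_mul; auto].
  apply (smooth_I_lift2 (fun a b e => a e * b e)); auto; intros; apply smooth_on_mul; auto.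
Qed.

Lemma SmMod_const c : SmMod (fun _ => c).
Proof.
  split; [apply (smooth_on_smooth_I 2); [lra | apply smooth_on_const] | apply moderate_const].
Qed.

Lemma SmMod_exp_neg_inv : SmMod exp_neg_inv.
Proof.
  split; [apply (smooth_on_smooth_I 2); [lra | apply smooth_on_exp_neg_inv] |].
  apply negligible_moderate, negligible_exp_neg_inv.
Qed.

Lemma SmMod_ext a b : SmMod a -> (forall e, a e = b e) -> SmMod b.
Proof. intros H E; replace b with a; [exact H | apply functional_extensionality, E]. Qed.

Lemma SmMod_opp a : SmMod a -> SmMod (fun e => - a e).
Proof.
  intros H; apply (SmMod_ext (fun e => (fun _ => -1) e * a e)); [| intros; ring].
  apply SmMod_mul; [apply SmMod_const | exact H].
Qed.

Lemma SmMod_sub a b : SmMod a -> SmMod b -> SmMod (fun e => a e - b e).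
Proof. intros Ha Hb; apply SmMod_add; [| apply SmMod_opp]; auto. Qed.

(* A smooth approximation of [Rmin x y = (x + y - |x - y|) / 2] from below. *)
Definition smin (d x y : R) : R := (x + y - sqrt ((x - y) ^ 2 + d ^ 2)) / 2.

Lemma sqrt_sq_add_sq_bounds x d :
  0 <= d -> Rabs x <= sqrt (x ^ 2 + d ^ 2) <= Rabs x + d.
Proof.
  intros Hd; pose proof (Rabs_pos x).
  assert (Hx2 : x ^ 2 = Rabs x ^ 2) by (rewrite <- pow2_abs; reflexivity).
  split.
  - rewrite <- (sqrt_pow2 (Rabs x)) by lra; apply sqrt_le_1_alt; nra.
  - rewrite <- (sqrt_pow2 (Rabs x + d)) by lra; apply sqrt_le_1_alt; nra.
Qed.

Lemma smin_bounds d x y : 0 <= d -> Rmin x y - d / 2 <= smin d x y <= Rmin x y.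
Proof.
  intros Hd; pose proof (sqrt_sq_add_sq_bounds (x - y) d Hd); unfold smin, Rmin, Rabs in *.
  destruct (Rle_dec x y), (Rcase_abs (x - y)); lra.
Qed.

Lemma Rabs_smin_le d x y : 0 <= d -> Rabs (smin d x y) <= Rabs x + Rabs y + d.
Proof.
  intros Hd; pose proof (smin_bounds d x y Hd); unfold Rmin, Rabs in *.
  destruct (Rle_dec x y), (Rcase_abs (smin d x y)), (Rcase_abs x), (Rcase_abs y); lra.
Qed.

Lemma smooth_on_smin c a b : smooth_on c a -> smooth_on c b ->
  smooth_on c (fun e => smin (exp_neg_inv e) (a e) (b e)).
Proof.
  intros Ha Hb; set (q := fun e => (a e - b e) ^ 2 + exp_neg_inv e ^ 2).
  assert (Hq : smooth_on c q).
  { apply (smooth_on_ext c (fun e =>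
      (a e + (fun _ => -1) e * b e) * (a e + (fun _ => -1) e * b e)
      + exp_neg_inv e * exp_neg_inv e)); [| intros; unfold q; ring].
    repeat first [apply smooth_on_add | apply smooth_on_mul | apply smooth_on_const
                 | apply smooth_on_exp_neg_inv | assumption]. }
  assert (Hs : smooth_on c (fun e => sqrt (q e))).
  { apply smooth_on_sqrt; auto; intros x _; unfold q.
    pose proof (pow2_ge_0 (a x - b x)); pose proof (pow_lt (exp_neg_inv x) 2 (exp_pos _)); lra. }
  apply (smooth_on_ext c
    (fun e => (a e + b e + (fun _ => -1) e * sqrt (q e)) * (fun _ => / 2) e));
    [| intros; unfold smin, q; field].
  repeat first [apply smooth_on_add | apply smooth_on_mul | apply smooth_on_const | assumption].
Qed.

Lemma SmMod_smin a b : SmMod a -> SmMod b -> SmMod (fun e => smin (exp_neg_inv e) (a e) (b e)).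
Proof.
  intros [Sa Ma] [Sb Mb]; split.
  - apply (smooth_I_lift2 (fun a b e => smin (exp_neg_inv e) (a e) (b e))); auto.
    intros; apply smooth_on_smin; auto.
  - apply (moderate_le (fun e => Rabs (a e) + Rabs (b e) + 1)).
    + apply moderate_add; [apply moderate_add; apply moderate_abs |
        apply moderate_const]; auto.
    + intros e [He _]; pose proof (exp_pos (- / e)).
      assert (exp_neg_inv e <= 1).
      { unfold exp_neg_inv; rewrite <- exp_0; left; apply exp_increasing.
        pose proof (Rinv_0_lt_compat e He); lra. }
      pose proof (Rabs_smin_le (exp_neg_inv e) (a e) (b e) ltac:(unfold exp_neg_inv; lra)); lra.
Qed.

Lemma negligible_smin_sub_Rmin a b :
  negligible (fun e => smin (exp_neg_inv e) (a e) (b e) - Rmin (a e) (b e)).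
Proof.
  apply (negligible_le exp_neg_inv); [apply negligible_exp_neg_inv |].
  intros e _; pose proof (exp_pos (- / e)).
  pose proof (smin_bounds (exp_neg_inv e) (a e) (b e) ltac:(unfold exp_neg_inv; lra)).
  apply Rabs_le; unfold exp_neg_inv in *; lra.
Qed.

Definition nopp (r : net) : net := fun e => - r e.

Definition le_upto_negl (r s : net) : Prop :=
  exists d, SmMod d /\ negligible d /\ forall e, inI e -> r e <= s e + d e.

Lemma eqsm_refl r : eqsm r r.
Proof. intros m; exists 0, 1; split; [lra |]; intros; rewrite Rminus_diag, Rabs_R0; lra. Qed.

Lemma lesm_iff_le_upto_negl r s : SmMod r -> SmMod s -> lesm r s <-> le_upto_negl r s.
Proof.
  intros Hr Hs; split.
  - intros [r' [s' [Hr' [Hs' [Er [Es Hle]]]]]].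
    exists (fun e => (r e - r' e) - (s e - s' e)); split; [| split].
    + apply SmMod_sub; apply SmMod_sub; auto.
    + apply negligible_sub; auto.
    + intros e He; specialize (Hle e He); lra.
  - intros [d [Hd [Nd Hle]]]; exists r, (fun e => s e + d e).
    split; [| split; [| split; [| split]]]; auto.
    + apply SmMod_add; auto.
    + apply eqsm_refl.
    + apply (negligible_ext _ _ (negligible_opp d Nd)); intros; ring.
Qed.

Lemma lesm_refl r : SmMod r -> lesm r r.
Proof.
  intros Hr; exists r, r; split; [| split; [| split; [| split]]]; auto using eqsm_refl.
  intros; lra.
Qed.

Lemma lesm_antisym r s : SmMod r -> SmMod s -> lesm r s -> lesm s r -> eqsm r s.
Proof.
  intros Hr Hs; rewrite !lesm_iff_le_upto_negl by auto.
  intros [d1 [_ [N1 H1]]] [d2 [_ [N2 H2]]].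
  apply (negligible_le (fun e => Rabs (d1 e) + Rabs (d2 e))).
  - apply negligible_add; apply negligible_abs; auto.
  - intros e He; specialize (H1 e He); specialize (H2 e He).
    pose proof (Rle_abs (d1 e)); pose proof (Rle_abs (d2 e)).
    pose proof (Rabs_pos (d1 e)); pose proof (Rabs_pos (d2 e)); apply Rabs_le; lra.
Qed.

Lemma lesm_trans r s t : SmMod r -> SmMod s -> SmMod t ->
  lesm r s -> lesm s t -> lesm r t.
Proof.
  intros Hr Hs Ht; rewrite !lesm_iff_le_upto_negl by auto.
  intros [d1 [D1 [N1 H1]]] [d2 [D2 [N2 H2]]]; exists (fun e => d1 e + d2 e).
  split; [apply SmMod_add | split; [apply negligible_add |]]; auto.
  intros e He; specialize (H1 e He); specialize (H2 e He); lra.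
Qed.

Lemma lesm_add2r r s t : SmMod r -> SmMod s -> SmMod t ->
  lesm r s -> lesm (nadd r t) (nadd s t).
Proof.
  intros Hr Hs Ht Hrs; apply lesm_iff_le_upto_negl in Hrs as [d [D [N H]]]; auto.
  apply lesm_iff_le_upto_negl; [apply SmMod_add; auto .. |].
  exists d; split; [| split]; auto.
  intros e He; specialize (H e He); unfold nadd; lra.
Qed.

(* [0 <= (r + d1) (s + d2) = r s + (r d2 + d1 s + d1 d2)] *)
Lemma lesm_mul_ge0 r s : SmMod r -> SmMod s ->
  lesm nzero r -> lesm nzero s -> lesm nzero (nmul r s).
Proof.
  intros Hr Hs Hr0 Hs0; pose proof (SmMod_const 0) as H0.
  apply lesm_iff_le_upto_negl in Hr0 as [d1 [D1 [N1 H1]]]; auto.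
  apply lesm_iff_le_upto_negl in Hs0 as [d2 [D2 [N2 H2]]]; auto.
  apply lesm_iff_le_upto_negl; [| apply SmMod_mul |]; auto.
  exists (fun e => r e * d2 e + d1 e * s e + d1 e * d2 e); split; [| split].
  - apply SmMod_add; [apply SmMod_add |]; apply SmMod_mul; auto.
  - destruct Hr as [_ Mr], Hs as [_ Ms].
    apply negligible_add; [apply negligible_add |];
      [apply negligible_mull | apply negligible_mulr | apply negligible_mull];
      auto using negligible_moderate.
  - intros e He; specialize (H1 e He); specialize (H2 e He); unfold nzero, nmul in *.
    pose proof (Rmult_le_pos _ _ H1 H2); lra.
Qed.

Lemma minsm_exists r s : SmMod r -> SmMod s -> exists m, is_minsm r s m.
Proof.
  intros Hr Hs; exists (fun e => smin (exp_neg_inv e) (r e) (s e)).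
  split; [apply SmMod_smin; auto | apply negligible_smin_sub_Rmin].
Qed.

Lemma Rabs_Rmin_sub_le a b c d : Rabs (Rmin a b - Rmin c d) <= Rabs (a - c) + Rabs (b - d).
Proof. unfold Rmin, Rabs; repeat destruct Rle_dec; repeat destruct Rcase_abs; lra. Qed.

Lemma minsm_glb r s m : SmMod r -> SmMod s -> is_minsm r s m ->
  lesm m r /\ lesm m s /\
  (forall u, SmMod u -> lesm u r -> lesm u s -> lesm u m).
Proof.
  intros Hr Hs [Hm Nm].
  assert (Hlow : forall x, SmMod x -> (forall e, Rmin (r e) (s e) <= x e) -> lesm m x).
  { intros x Hx Hmin; apply lesm_iff_le_upto_negl; auto.
    exists (fun e => m e - smin (exp_neg_inv e) (r e) (s e)); split; [| split].
    - apply SmMod_sub, SmMod_smin; auto.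
    - apply (negligible_ext _ _ (negligible_sub _ _ Nm (negligible_smin_sub_Rmin r s))).
      intros; ring.
    - intros e _; specialize (Hmin e); pose proof (exp_pos (- / e)).
      pose proof (smin_bounds (exp_neg_inv e) (r e) (s e) ltac:(unfold exp_neg_inv; lra)); lra. }
  split; [apply Hlow; auto using Rmin_l | split; [apply Hlow; auto using Rmin_r |]].
  intros u Hu; rewrite !lesm_iff_le_upto_negl by auto.
  intros [d1 [D1 [N1 H1]]] [d2 [D2 [N2 H2]]].
  set (a := fun e => r e + d1 e); set (b := fun e => s e + d2 e).
  assert (Ha : SmMod a) by (apply SmMod_add; auto).
  assert (Hb : SmMod b) by (apply SmMod_add; auto).
  exists (fun e => smin (exp_neg_inv e) (a e) (b e) + exp_neg_inv e - m e); split; [| split].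
  - apply SmMod_sub; [apply SmMod_add; [apply SmMod_smin | apply SmMod_exp_neg_inv] |]; auto.
  - assert (Nab : negligible (fun e => Rmin (a e) (b e) - Rmin (r e) (s e))).
    { apply (negligible_le (fun e => Rabs (d1 e) + Rabs (d2 e))).
      - apply negligible_add; apply negligible_abs; auto.
      - intros e _; pose proof (Rabs_Rmin_sub_le (a e) (b e) (r e) (s e)).
        unfold a, b in *; replace (r e + d1 e - r e) with (d1 e) in * by ring;
        replace (s e + d2 e - s e) with (d2 e) in * by ring; lra. }
    apply (negligible_ext (fun e =>
      (smin (exp_neg_inv e) (a e) (b e) - Rmin (a e) (b e)) + (Rmin (a e) (b e) - Rmin (r e) (s e))
      - (m e - Rmin (r e) (s e)) + exp_neg_inv e)); [| intros; ring].
    apply negligible_add; [apply negligible_sub; [apply negligible_add |] |];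
      auto using negligible_smin_sub_Rmin, negligible_exp_neg_inv.
  - intros e He; specialize (H1 e He); specialize (H2 e He); pose proof (exp_pos (- / e)).
    pose proof (smin_bounds (exp_neg_inv e) (a e) (b e) ltac:(unfold exp_neg_inv; lra)).
    pose proof (Rmin_glb (a e) (b e) (u e) H1 H2); unfold exp_neg_inv in *; lra.
Qed.

Lemma lesm_opp_iff r s : SmMod r -> SmMod s -> lesm (nopp s) (nopp r) <-> lesm r s.
Proof.
  intros Hr Hs; assert (Hr' : SmMod (nopp r)) by (apply SmMod_opp, Hr).
  assert (Hs' : SmMod (nopp s)) by (apply SmMod_opp, Hs).
  rewrite !lesm_iff_le_upto_negl by assumption; unfold nopp.
  split; intros [d [D [N H]]]; exists d; split; [| split | | split]; auto;
    intros e He; specialize (H e He); lra.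
Qed.

Lemma is_minsm_opp r s m : is_maxsm r s m -> is_minsm (nopp r) (nopp s) (nopp m).
Proof.
  intros [Hm Nm]; split; [apply SmMod_opp, Hm |].
  apply (negligible_ext _ _ (negligible_opp _ Nm)).
  intros; unfold nopp; rewrite <- Ropp_Rmax; ring.
Qed.

Lemma is_maxsm_opp r s m : is_minsm (nopp r) (nopp s) m -> is_maxsm r s (nopp m).
Proof.
  intros [Hm Nm]; split; [apply SmMod_opp, Hm |].
  apply (negligible_ext _ _ (negligible_opp _ Nm)); intros e _; unfold nopp.
  replace (Rmax (r e) (s e)) with (- Rmin (- r e) (- s e))
    by (rewrite Ropp_Rmin, !Ropp_involutive; reflexivity); ring.
Qed.

Lemma maxsm_exists r s : SmMod r -> SmMod s -> exists m, is_maxsm r s m.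
Proof.
  intros Hr Hs; destruct (minsm_exists (nopp r) (nopp s)) as [m Hm];
    try apply SmMod_opp; auto.
  exists (nopp m); apply is_maxsm_opp, Hm.
Qed.

Lemma maxsm_lub r s m : SmMod r -> SmMod s -> is_maxsm r s m ->
  lesm r m /\ lesm s m /\
  (forall u, SmMod u -> lesm r u -> lesm s u -> lesm m u).
Proof.
  intros Hr Hs Hmax; pose proof (proj1 Hmax) as Hm.
  destruct (minsm_glb (nopp r) (nopp s) (nopp m)) as [Hmr [Hms Hglb]];
    try apply SmMod_opp; auto using is_minsm_opp.
  split; [| split]; [apply lesm_opp_iff; auto .. |].
  intros u Hu Hru Hsu; apply lesm_opp_iff; auto.
  apply Hglb; [apply SmMod_opp; auto | apply lesm_opp_iff; auto ..].
Qed.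

(* For [t >= 0] the defect vanishes; for [t < 0] it is [|t| |a - b|]. *)
Lemma Rabs_Rmin_mulr_sub_le a b t k : 0 <= k -> - k <= t ->
  Rabs (Rmin a b * t - Rmin (a * t) (b * t)) <= k * (Rabs a + Rabs b).
Proof.
  intros Hk Ht; pose proof (Rle_abs a); pose proof (Rle_abs b).
  pose proof (Rle_abs (- a)); pose proof (Rle_abs (- b)); rewrite Rabs_Ropp in *.
  apply Rabs_le; unfold Rmin.
  destruct (Rle_dec a b), (Rle_dec (a * t) (b * t)); split; nra.
Qed.

Lemma minsm_mulr r s t m m' : SmMod r -> SmMod s -> SmMod t -> lesm nzero t ->
  is_minsm r s m -> is_minsm (nmul r t) (nmul s t) m' -> eqsm (nmul m t) m'.
Proof.
  intros Hr Hs Ht Ht0 [_ Nm] [_ Nm'].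
  destruct (proj1 (lesm_iff_le_upto_negl nzero t (SmMod_const 0) Ht) Ht0)
    as [d [_ [Nd Hd]]].
  destruct Hr as [_ Mr], Hs as [_ Ms], Ht as [_ Mt]; unfold eqsm, nmul, nzero in *.
  apply (negligible_ext (fun e => (m e - Rmin (r e) (s e)) * t e
    + (Rmin (r e) (s e) * t e - Rmin (r e * t e) (s e * t e))
    - (m' e - Rmin (r e * t e) (s e * t e)))); [| intros; ring].
  apply negligible_sub; [apply negligible_add |]; auto.
  - apply negligible_mulr; auto.
  - apply (negligible_le (fun e => Rabs (d e) * (Rabs (r e) + Rabs (s e)))).
    + apply negligible_mulr; [apply negligible_abs, Nd |].
      apply moderate_add; apply moderate_abs; auto.
    + intros e He; specialize (Hd e He); pose proof (Rle_abs (d e)).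
      apply Rabs_Rmin_mulr_sub_le; [apply Rabs_pos | lra].
Qed.

Theorem proposition4p15 :
  (* <= is a partial order on R~_sm *)
  (forall r, SmMod r -> lesm r r) /\
  (forall r s, SmMod r -> SmMod s -> lesm r s -> lesm s r -> eqsm r s) /\
  (forall r s t, SmMod r -> SmMod s -> SmMod t ->
     lesm r s -> lesm s t -> lesm r t) /\
  (* compatibility with the ring operations *)
  (forall r s t, SmMod r -> SmMod s -> SmMod t ->
     lesm r s -> lesm (nadd r t) (nadd s t)) /\
  (forall r s, SmMod r -> SmMod s ->
     lesm nzero r -> lesm nzero s -> lesm nzero (nmul r s)) /\
  (* min is well defined and is the infimum *)
  (forall r s, SmMod r -> SmMod s -> exists m, is_minsm r s m) /\
  (forall r s m, SmMod r -> SmMod s -> is_minsm r s m ->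
     lesm m r /\ lesm m s /\
     (forall u, SmMod u -> lesm u r -> lesm u s -> lesm u m)) /\
  (* max is well defined and is the supremum *)
  (forall r s, SmMod r -> SmMod s -> exists m, is_maxsm r s m) /\
  (forall r s m, SmMod r -> SmMod s -> is_maxsm r s m ->
     lesm r m /\ lesm s m /\
     (forall u, SmMod u -> lesm r u -> lesm s u -> lesm m u)) /\
  (* f-ring property: (r /\ s) t = rt /\ st for t >= 0 *)
  (forall r s t m m', SmMod r -> SmMod s -> SmMod t -> lesm nzero t ->
     is_minsm r s m -> is_minsm (nmul r t) (nmul s t) m' ->
     eqsm (nmul m t) m').
Proof.
  exact (conj lesm_refl (conj lesm_antisym (conj lesm_trans (conj lesm_add2r
    (conj lesm_mul_ge0 (conj minsm_exists (conj minsm_glb (conj maxsm_exists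
    (conj maxsm_lub minsm_mulr))))))))).
Qed.
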